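(* Let $(x_k)$ be a bounded sequence in a Banach space $X$. Then $\operatorname{cca}(x_k)\le\operatorname{ca}(x_k)$.
   Context: For a bounded sequence $(x_k)$: $\operatorname{ca}(x_k)=\inf_{n\in\mathbb N}\sup\{\|x_k-x_l\|: k,l\ge n\}$, and $\operatorname{cca}(x_k)=\operatorname{ca}(y_k)$ where $y_k=\frac1k\sum_{i=1}^k x_i$. *)

From HB Require Import structures.
From mathcomp Require Import all_boot all_order all_algebra.
From mathcomp Require Import all_classical all_reals all_analysis.
Set Implicit Arguments. Unset Strict Implicit. Unset Printing Implicit Defensive.
Import Order.TTheory GRing.Theory Num.Theory.
Import numFieldNormedType.Exports.
Local Open Scope classical_set_scope.
Local Open Scope ring_scope.

(* Sequences are indexed by nat starting at 0 (paper: starting at 1). *)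

Definition ca {R : realType} {X : normedModType R} (x : nat -> X) : \bar R :=
  ereal_inf [set ereal_sup [set (`|x kl.1 - x kl.2|)%:E
                            | kl in [set kl : nat * nat | (n <= kl.1)%N /\ (n <= kl.2)%N]]
             | n in [set: nat]].

Definition cesaro {R : realType} {X : normedModType R} (x : nat -> X) : nat -> X :=
  fun k => (k.+1%:R)^-1 *: \sum_(i < k.+1) x i.

Definition cca {R : realType} {X : normedModType R} (x : nat -> X) : \bar R :=
  ca (cesaro x).

From Pilot Require Import Defs.
From HB Require Import structures.
From mathcomp Require Import all_boot all_order all_algebra.
From mathcomp Require Import all_classical all_reals all_analysis.
From mathcomp Require Import zify ring lra.
Import Order.TTheory GRing.Theory Num.Theory.
Import numFieldNormedType.Exports.
Local Open Scope classical_set_scope.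
Local Open Scope ring_scope.

(* Write [y_k - y_l] as the average of the [(k+1)(l+1)] differences [x_i - x_j].
   If [|x_i - x_j| <= r] for [i, j >= N] and [|x_i| <= M], each difference is at
   most [r + 2M [i < N] + 2M [j < N]]; averaging gives
   [|y_k - y_l| <= r + 2MN/(k+1) + 2MN/(l+1)], so every bound on a tail of [x]
   becomes, up to any [e > 0], a bound on a late enough tail of [y]. *)

Lemma sum_ltn_indicator_le (R : numDomainType) (N n : nat) :
  \sum_(i < n) ((i < N)%N%:R : R) <= N%:R.
Proof.
suff -> : \sum_(i < n) ((i < N)%N%:R : R) = (minn n N)%:R.
  by rewrite ler_nat geq_minr.
elim: n => [|n IH]; first by rewrite big_ord0 min0n.
rewrite big_ord_recr /= IH -natrD; congr (_%:R).
by case: (ltnP n N) => h /=; lia.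
Qed.

Lemma div_succ_le_eventually (R : archiRealFieldType) (c e : R) : 0 < e ->
  exists m : nat, forall p, (m <= p)%N -> c / p.+1%:R <= e.
Proof.
move=> e0; exists (Num.truncn (c / e)) => p hp.
have ltm : c / e < (Num.truncn (c / e)).+1%:R by apply: truncnS_gt.
have lep : ((Num.truncn (c / e)).+1%:R : R) <= p.+1%:R by rewrite ler_nat.
have ce : c / e * e = c by rewrite mulfVK // gt_eqF.
rewrite ler_pdivrMr ?ltr0n //; nra.
Qed.

Section CesaroDifference.
Variables (R : realType) (X : normedModType R) (x : nat -> X).

Lemma cesaroB (k l : nat) :
  Defs.cesaro x k - Defs.cesaro x l =
  (k.+1%:R * l.+1%:R)^-1 *: \sum_(i < k.+1) \sum_(j < l.+1) (x i - x j).
Proof.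
have -> : \sum_(i < k.+1) \sum_(j < l.+1) (x i - x j) =
   l.+1%:R *: \sum_(i < k.+1) x i - k.+1%:R *: \sum_(j < l.+1) x j.
  under eq_bigr => i _ do rewrite sumrB sumr_const card_ord.
  by rewrite sumrB sumr_const card_ord !scaler_nat sumrMnl.
have hk : (k.+1%:R : R) != 0 by rewrite pnatr_eq0.
have hl : (l.+1%:R : R) != 0 by rewrite pnatr_eq0.
rewrite scalerBr !scalerA invfM /Defs.cesaro.
congr (_ *: _ - _ *: _); first by rewrite -mulrA mulVf // mulr1.
by rewrite mulrAC mulVf // mul1r.
Qed.

Variables (M r : R) (N : nat).
Hypothesis normx_le : forall i, `|x i| <= M.
Hypothesis tail_le : forall i j, (N <= i)%N -> (N <= j)%N -> `|x i - x j| <= r.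

Let bound (i j : nat) : R := r + 2 * M * (i < N)%N%:R + 2 * M * (j < N)%N%:R.

Let normB_le_bound i j : `|x i - x j| <= bound i j.
Proof.
have h2M : `|x i - x j| <= M + M := le_trans (ler_normB _ _) (lerD (normx_le i) (normx_le j)).
have r0 : 0 <= r by have := tail_le N N (leqnn N) (leqnn N); rewrite subrr normr0.
have M0 : 0 <= M := le_trans (normr_ge0 _) (normx_le 0%N).
rewrite /bound; case: ltnP => hi; case: ltnP => hj /=; rewrite ?mulr1 ?mulr0.
- lra.
- lra.
- lra.
- by have := tail_le _ _ hi hj; lra.
Qed.

Let sum_bound (k l : nat) :
  \sum_(i < k.+1) \sum_(j < l.+1) bound i j =
  k.+1%:R * l.+1%:R * r
  + 2 * M * l.+1%:R * \sum_(i < k.+1) ((i < N)%N%:R : R)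
  + 2 * M * k.+1%:R * \sum_(j < l.+1) ((j < N)%N%:R : R).
Proof.
set Cl := \sum_(j < l.+1) _.
have row i : \sum_(j < l.+1) bound i j = (r + 2 * M * (i < N)%N%:R) * l.+1%:R + 2 * M * Cl.
  by rewrite big_split /= sumr_const card_ord -mulr_sumr -[_ *+ l.+1]mulr_natr.
under eq_bigr => i _ do rewrite row.
rewrite big_split /= sumr_const card_ord -mulr_suml big_split /= sumr_const card_ord -mulr_sumr.
by rewrite -[r *+ _]mulr_natr -[_ *+ k.+1]mulr_natr; ring.
Qed.

Lemma normr_cesaroB_le (k l : nat) :
  `|Defs.cesaro x k - Defs.cesaro x l| <= r + 2 * M * N%:R / k.+1%:R + 2 * M * N%:R / l.+1%:R.
Proof.
have M0 : 0 <= M := le_trans (normr_ge0 _) (normx_le 0%N).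
have K0 : (0 : R) < k.+1%:R by rewrite ltr0n.
have L0 : (0 : R) < l.+1%:R by rewrite ltr0n.
have KL0 : 0 <= (k.+1%:R * l.+1%:R : R)^-1 by rewrite invr_ge0 mulr_ge0 // ltW.
have Ck := sum_ltn_indicator_le R N k.+1.
have Cl := sum_ltn_indicator_le R N l.+1.
rewrite cesaroB normrZ ger0_norm //.
apply: le_trans (ler_wpM2l KL0 (_ : _ <= \sum_(i < k.+1) \sum_(j < l.+1) bound i j)) _.
  apply: le_trans (ler_norm_sum _ _ _) _; apply: ler_sum => i _.
  by apply: le_trans (ler_norm_sum _ _ _) _; apply: ler_sum => j _; apply: normB_le_bound.
rewrite sum_bound.
set Sk := \sum_(i < k.+1) _; set Sl := \sum_(j < l.+1) _.
have -> : (k.+1%:R * l.+1%:R)^-1 * (k.+1%:R * l.+1%:R * r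
    + 2 * M * l.+1%:R * Sk + 2 * M * k.+1%:R * Sl) =
    r + 2 * M * Sk / k.+1%:R + 2 * M * Sl / l.+1%:R.
  by field; rewrite ?gt_eqF.
have scale (S P : R) : 0 < P -> S <= N%:R -> 2 * M * S / P <= 2 * M * N%:R / P.
  move=> P0 SN; apply: ler_wpM2r; first by rewrite invr_ge0 ltW.
  by apply: ler_wpM2l; rewrite ?mulr_ge0.
by rewrite !lerD ?scale.
Qed.

End CesaroDifference.

Lemma ca_le_of_tail_bounds (R : realType) (X Y : normedModType R)
    (y : nat -> Y) (x : nat -> X) :
  (forall (N : nat) (r e : R), 0 < e ->
     (forall i j, (N <= i)%N -> (N <= j)%N -> `|x i - x j| <= r) ->
     exists m : nat, forall k l, (m <= k)%N -> (m <= l)%N -> `|y k - y l| <= r + e) ->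
  (ca y <= ca x)%E.
Proof.
move=> htail; rewrite {2}/ca; apply/ereal_infP => _ [N _ <-].
set D := ereal_sup _.
have hx i j : (N <= i)%N -> (N <= j)%N -> (`|x i - x j|%:E <= D)%E.
  by move=> hi hj; apply: ereal_sup_ubound; exists (i, j).
case E: D => [r| |]; last 2 first.
- by rewrite leey.
- by move: (hx N N (leqnn _) (leqnn _)); rewrite E leeNy_eq.
apply/lee_addgt0Pr => e e0.
have [|m hm] := htail N r e e0.
  by move=> i j hi hj; rewrite -lee_fin -E; apply: hx.
apply: le_trans (_ : ereal_sup [set (`|y kl.1 - y kl.2|)%:E
    | kl in [set kl : nat * nat | (m <= kl.1)%N /\ (m <= kl.2)%N]] <= _)%E.
  by apply: ereal_inf_lbound; exists m.
by apply/ereal_supP => _ [[k l] /= [hk hl] <-]; rewrite lee_fin hm.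
Qed.

Theorem lemma3p4 (R : realType) (X : completeNormedModType R) (x : nat -> X)
  (hbdd : exists M : R, forall k, `|x k| <= M) :
  (cca x <= ca x)%E.
Proof.
case: hbdd => M hM; apply: ca_le_of_tail_bounds => N r e e0 hr.
have [m hm] := @div_succ_le_eventually _ (2 * M * N%:R) _ (divr_gt0 e0 (ltr0n R 2)).
exists m => k l hk hl.
apply: le_trans (@normr_cesaroB_le _ _ x M r N hM hr k l) _.
by rewrite -addrA lerD2l [leRHS](splitr e) lerD // hm.
Qed.
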